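(* Let $(X,\mathcal U)$ be a non-archimedean uniform space and $\mathcal B$ a base of $\mathcal U$ consisting of equivalence relations. Then: (1) realizing $A_{NA}(X,\mathcal U)$ on the free abelian group $A(X)$, and letting $\langle\varepsilon\rangle$ denote the subgroup of $A(X)$ generated by $\{x-y:(x,y)\in\varepsilon\}$, the family $\{\langle\varepsilon\rangle:\varepsilon\in\mathcal B\}$ is a base of neighborhoods of $0$ in $A_{NA}(X,\mathcal U)$; (2) realizing $B_{NA}(X,\mathcal U)$ on the free Boolean group $B(X)$, and letting $\langle\varepsilon\rangle$ denote the subgroup of $B(X)$ generated by $\{x-y:(x,y)\in\varepsilon\}$, the family $\{\langle\varepsilon\rangle:\varepsilon\in\mathcal B\}$ is a base of neighborhoods of $0$ in $B_{NA}(X,\mathcal U)$.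
   Context: A uniform space is non-archimedean if its uniformity has a base of equivalence relations. A topological group is non-archimedean if it has a local base at the identity of open subgroups; Boolean if every non-identity element has order 2. $A_{NA}(X,\mathcal U)$ (resp. $B_{NA}(X,\mathcal U)$) is the abelian (resp. Boolean) non-archimedean Hausdorff group with uniformly continuous $i\colon X\to G$ through which every uniformly continuous map into such a group factors uniquely by a continuous homomorphism; it is algebraically $A(X)$ (resp. $B(X)$) with $i$ the inclusion of generators. *)

From HB Require Import structures.
From mathcomp Require Import all_boot all_order all_algebra.
From mathcomp Require Import boolp classical_sets topology.
From mathcomp Require Import freeg.

Set Implicit Arguments.
Unset Strict Implicit.
Unset Printing Implicit Defensive.

Import GRing.Theory.
Local Open Scope classical_set_scope.
Local Open Scope ring_scope.

Definition is_topology (T : Type) (tau : set (set T)) : Prop :=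
  [/\ tau setT,
      (forall U V, tau U -> tau V -> tau (U `&` V)) &
      (forall (F : set (set T)), F `<=` tau -> tau (\bigcup_(U in F) U))].

Definition nbhd_of (T : Type) (tau : set (set T)) (a : T) (N : set T) : Prop :=
  exists2 U, tau U & (U a /\ U `<=` N).

Definition tcontinuous (T1 T2 : Type) (tau1 : set (set T1)) (tau2 : set (set T2))
  (f : T1 -> T2) : Prop :=
  forall V, tau2 V -> tau1 (f @^-1` V).

Definition hausdorff_top (T : Type) (tau : set (set T)) : Prop :=
  forall a b : T, a <> b ->
    exists U V, [/\ tau U, tau V, U a, V b & U `&` V = set0].

Definition is_subgroup (G : zmodType) (H : set G) : Prop :=
  H 0 /\ (forall a b, H a -> H b -> H (a - b)).

Definition gen_subgroup (G : zmodType) (S : set G) : set G :=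
  [set a | forall H : set G, is_subgroup H -> S `<=` H -> H a].

Definition group_topology (G : zmodType) (tau : set (set G)) : Prop :=
  is_topology tau /\
  (forall (a b : G) (W : set G), nbhd_of tau (a - b) W ->
     exists U V, [/\ nbhd_of tau a U, nbhd_of tau b V &
                    forall u v, U u -> V v -> W (u - v)]).

Definition non_archimedean_group (G : zmodType) (tau : set (set G)) : Prop :=
  forall W, nbhd_of tau 0 W ->
    exists2 H : set G, tau H /\ is_subgroup H & H `<=` W.

Definition NA_Hausdorff_group (G : zmodType) (tau : set (set G)) : Prop :=
  [/\ group_topology tau, hausdorff_top tau & non_archimedean_group tau].

Definition boolean_group (G : zmodType) : Prop := forall a : G, a + a = 0.

(** Uniform continuity of [f : X -> G] where [G] carries its group uniformity
    (entourages {(a,b) | b - a \in W}, W neighborhood of 0). *)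
Definition unif_cont_to_group (X : uniformType) (G : zmodType)
  (tau : set (set G)) (f : X -> G) : Prop :=
  forall W, nbhd_of tau 0 W ->
    exists2 E, entourage E & (forall x y, E (x, y) -> W (f y - f x)).

Definition additive_map (G1 G2 : zmodType) (phi : G1 -> G2) : Prop :=
  forall a b, phi (a - b) = phi a - phi b.

Definition freeAb (X : choiceType) := {freeg X / int}.
Definition freeBool (X : choiceType) := {freeg X / 'Z_2}.

Definition iA (X : choiceType) (x : X) : freeAb X := << x >>.
Definition iB (X : choiceType) (x : X) : freeBool X := << x >>.

(** Generic universal property: [tau] on [F] with generator map [i] makes
    (F, i) the free object of the class [C] of abelian NA Hausdorff groups
    (additionally restricted by the predicate [P] on groups). *)
Definition free_NA_universal (X : uniformType) (F : zmodType) (i : X -> F)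
  (tau : set (set F)) (P : zmodType -> Prop) : Prop :=
  [/\ P F, NA_Hausdorff_group tau, unif_cont_to_group tau i &
      forall (G : zmodType) (tauG : set (set G)),
        P G -> NA_Hausdorff_group tauG ->
        forall f : X -> G, unif_cont_to_group tauG f ->
          (exists phi : F -> G,
             [/\ additive_map phi, tcontinuous tau tauG phi & phi \o i = f]) /\
          (forall phi1 phi2 : F -> G,
             additive_map phi1 -> tcontinuous tau tauG phi1 -> phi1 \o i = f ->
             additive_map phi2 -> tcontinuous tau tauG phi2 -> phi2 \o i = f ->
             phi1 = phi2)].

Definition is_A_NA (X : uniformType) (tau : set (set (freeAb X))) : Prop :=
  free_NA_universal (@iA X) tau (fun _ => True).

Definition is_B_NA (X : uniformType) (tau : set (set (freeBool X))) : Prop :=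
  free_NA_universal (@iB X) tau boolean_group.

Definition equiv_rel (X : Type) (E : set (X * X)) : Prop :=
  [/\ (forall x, E (x, x)),
      (forall x y, E (x, y) -> E (y, x)) &
      (forall x y z, E (x, y) -> E (y, z) -> E (x, z))].

Definition equiv_base (X : uniformType) (B : set (set (X * X))) : Prop :=
  [/\ (forall E, B E -> entourage E),
      (forall E, B E -> equiv_rel E) &
      (forall E, entourage E -> exists2 D, B D & D `<=` E)].

Definition nbhd_base (T : Type) (tau : set (set T)) (a : T) (N : set (set T)) :=
  (forall V, N V -> nbhd_of tau a V) /\
  (forall W, nbhd_of tau a W -> exists2 V, N V & V `<=` W).

Definition genA (X : uniformType) (E : set (X * X)) : set (freeAb X) :=
  gen_subgroup [set iA p.1 - iA p.2 | p in E].
Definition genB (X : uniformType) (E : set (X * X)) : set (freeBool X) :=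
  gen_subgroup [set iB p.1 - iB p.2 | p in E].

From Pilot Require Import Defs.
From mathcomp Require Import all_boot all_order all_algebra.
From mathcomp Require Import boolp classical_sets topology.
From mathcomp Require Import freeg.
Local Open Scope classical_set_scope.
Local Open Scope ring_scope.
Import GRing.Theory.

(** Every [<eps>] is a neighborhood of 0: choosing a representative [r x] of
    each [eps]-class, [x |-> r x] is uniformly continuous into the discrete
    group, so it lifts to a continuous additive [phi].  The kernel of [phi] is
    open, and it lies in [<eps>] because [w - phi w] lies in [<eps>] for every
    generator [w = x], hence for every [w].  Conversely, any neighborhood of 0
    contains an open subgroup [H]; uniform continuity of the generator map gives
    an [eps] in the base with [x - y \in H] whenever [(x, y) \in eps], hence
    [<eps> \subset H]. *)

Lemma is_subgroupD (G : zmodType) (H : set G) : is_subgroup H ->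
  forall a b, H a -> H b -> H (a + b).
Proof.
move=> [H0 HB] a b Ha Hb.
have Hnb : H (- b) by rewrite -sub0r; exact: HB.
by rewrite -(opprK b); apply: HB.
Qed.

Lemma is_subgroupMn (G : zmodType) (H : set G) : is_subgroup H ->
  forall a n, H a -> H (a *+ n).
Proof.
move=> sH a n Ha; elim: n => [|n IH]; first by rewrite mulr0n; case: sH.
by rewrite mulrS; apply: is_subgroupD.
Qed.

Lemma is_subgroupMz (G : zmodType) (H : set G) : is_subgroup H ->
  forall a (n : int), H a -> H (a *~ n).
Proof.
move=> sH a [n|n] Ha; first exact: is_subgroupMn.
rewrite NegzE mulrNz -sub0r; case: (sH) => H0 HB; apply: HB => //.
exact: is_subgroupMn.
Qed.

Lemma gen_subgroup_is_subgroup (G : zmodType) (S : set G) :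
  is_subgroup (gen_subgroup S).
Proof.
split; first by move=> H [].
by move=> a b Ha Hb H sH SH; case: (sH) => _ HB; apply: HB; [exact: Ha|exact: Hb].
Qed.

Lemma additive_map0 (G1 G2 : zmodType) (phi : G1 -> G2) :
  additive_map phi -> phi 0 = 0.
Proof. by move=> addphi; have := addphi 0 0; rewrite !subrr. Qed.

Lemma freeg_subgroupT (R : nzRingType) (X : choiceType) (H : set {freeg X / R}) :
  is_subgroup H -> (forall k x, H << k *g x >>) -> forall D, H D.
Proof.
move=> sH Hk D; rewrite -(freeg_sumE D).
apply: (big_ind H); first by case: sH.
  exact: is_subgroupD.
by move=> i _; apply: Hk.
Qed.

Lemma freeAb_subgroupT (X : choiceType) (H : set (freeAb X)) :
  is_subgroup H -> (forall x, H << x >>) -> forall D, H D.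
Proof.
move=> sH Hx; apply: freeg_subgroupT => // k x.
by rewrite -[k]intz -freegU_mulz; exact: is_subgroupMz.
Qed.

Lemma freeBool_subgroupT (X : choiceType) (H : set (freeBool X)) :
  is_subgroup H -> (forall x, H << x >>) -> forall D, H D.
Proof.
move=> sH Hx; apply: freeg_subgroupT => // k x.
by rewrite -[k]natr_Zp -freegU_muln; exact: is_subgroupMn.
Qed.

Lemma discrete_NA_Hausdorff_group (G : zmodType) :
  NA_Hausdorff_group (setT : set (set G)).
Proof.
split.
- split; first by split.
  move=> a b W [U _ [Uab UW]]; exists [set a], [set b]; split.
  + by exists [set a] => //; split.
  + by exists [set b] => //; split.
  + by move=> u v -> ->; apply: UW.
- move=> a b ab; exists [set a], [set b]; split => //.
  by apply/seteqP; split => x //= [xa xb]; apply: ab; rewrite -xa -xb.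
- move=> W [U _ [U0 UW]]; exists [set 0].
    by split => //; split => // a b -> ->; rewrite subrr.
  by move=> x /= ->; apply: UW.
Qed.

Lemma equiv_rel_representative (X : choiceType) (E : set (X * X)) :
  Defs.equiv_rel E ->
  exists r : X -> X, (forall x, E (x, r x)) /\ (forall x y, E (x, y) -> r x = r y).
Proof.
case=> Erefl Esym Etr.
have exE (x : X) : exists z, `[< E (x, z) >] by exists x; apply/asboolP/Erefl.
exists (fun x => xchoose (exE x)); split => [x|x y Exy].
  by apply/asboolP; exact: (xchooseP (exE x)).
apply: eq_xchoose => z /=; apply/asboolP/asboolP => [Exz|Eyz].
  exact: Etr (Esym _ _ Exy) Exz.
exact: Etr Exy Eyz.
Qed.

Section FreeNAGroup.

Variables (R : nzRingType) (X : uniformType) (P : zmodType -> Prop).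
Variable tau : set (set {freeg X / R}).

Let gen (E : set (X * X)) : set {freeg X / R} :=
  gen_subgroup [set << p.1 >> - << p.2 >> | p in E].

Hypothesis generators_span : forall H : set {freeg X / R},
  is_subgroup H -> (forall x, H << x >>) -> forall D, H D.

Hypothesis tau_free : free_NA_universal (fun x : X => << x >>) tau P.

Lemma kernel_sub_gen_subgroup (E : set (X * X)) (r : X -> X)
    (phi : {freeg X / R} -> {freeg X / R}) :
  (forall x, E (x, r x)) -> additive_map phi ->
  (forall x, phi << x >> = << r x >>) ->
  forall w, phi w = 0 -> gen E w.
Proof.
move=> Er addphi phi_gen w phiw.
have sgen : is_subgroup (gen E) := gen_subgroup_is_subgroup _ _.
pose T := [set w | gen E (w - phi w)].
have sT : is_subgroup T.
  split; first by rewrite /T /= additive_map0 // subrr; case: sgen.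
  move=> a b Ta Tb; rewrite /T /= addphi.
  have -> : a - b - (phi a - phi b) = (a - phi a) - (b - phi b).
    by rewrite !opprB addrACA [RHS]addrACA [- b + _]addrC.
  by case: sgen => _ HB; apply: HB.
have Tx x : T << x >>.
  by rewrite /T /= phi_gen => H _ SH; apply: SH; exists (x, r x).
by have := generators_span _ sT Tx w; rewrite /T /= phiw subr0.
Qed.

Lemma gen_subgroup_nbhd0 (E : set (X * X)) :
  entourage E -> Defs.equiv_rel E -> nbhd_of tau 0 (gen E).
Proof.
move=> entE eqE; have [r [Er rE]] := equiv_rel_representative _ _ eqE.
have [PF _ _ univ] := tau_free.
pose f x : {freeg X / R} := << r x >>.
have uf : unif_cont_to_group (setT : set (set {freeg X / R})) f.
  move=> W [U _ [U0 UW]]; exists E => // x y Exy.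
  by rewrite /f (rE _ _ Exy) subrr; apply: UW.
have [[phi [addphi contphi phiE]] _] := univ _ _ PF (discrete_NA_Hausdorff_group _) f uf.
exists (phi @^-1` [set 0]); first exact: contphi.
split; first exact: additive_map0.
apply: (kernel_sub_gen_subgroup _ _ _ Er addphi) => x.
by rewrite -/(f x) -phiE.
Qed.

Lemma nbhd0_contains_gen_subgroup (B : set (set (X * X))) (W : set {freeg X / R}) :
  equiv_base B -> nbhd_of tau 0 W -> exists2 E, B E & gen E `<=` W.
Proof.
move=> [_ Beq Bbase] nW; have [_ [_ _ NA] ui _] := tau_free.
have [H [tH sH] HW] := NA W nW.
have nH : nbhd_of tau 0 H by exists H => //; split => //; case: sH.
have [D entD Di] := ui H nH.
have [E BE ED] := Bbase D entD.
exists E => // w gw; apply: HW; apply: gw => // _ [[x y] Exy <-] /=.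
have [_ Esym _] := Beq E BE.
exact: Di (ED _ (Esym _ _ Exy)).
Qed.

Lemma free_NA_nbhd_base (B : set (set (X * X))) :
  equiv_base B -> nbhd_base tau 0 [set gen E | E in B].
Proof.
move=> hB; split => [_ [E BE <-]|W nW].
  have [Bent Beq _] := hB; exact: gen_subgroup_nbhd0 E (Bent E BE) (Beq E BE).
have [E BE genW] := nbhd0_contains_gen_subgroup B W hB nW.
by exists (gen E) => //; exists E.
Qed.

End FreeNAGroup.

Theorem theorem4p14 (X : uniformType) (B : set (set (X * X))) :
  equiv_base B ->
  (forall tau : set (set (freeAb X)), is_A_NA tau ->
     nbhd_base tau 0 [set genA E | E in B]) /\
  (forall tau : set (set (freeBool X)), is_B_NA tau ->
     nbhd_base tau 0 [set genB E | E in B]).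
Proof.
move=> hB; split => tau htau.
- exact: free_NA_nbhd_base _ _ _ _ (@freeAb_subgroupT X) htau B hB.
- exact: free_NA_nbhd_base _ _ _ _ (@freeBool_subgroupT X) htau B hB.
Qed.
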